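(* Let $\mathcal V$ be a finite-dimensional vector space over $\mathbb K\in\{\mathbb R,\mathbb C\}$ with norm $\|\cdot\|$, dual space $\mathcal V^\star$ with dual norm $\|\cdot\|_\star$, and $\mathrm d_\star(x,y)=\tfrac12\|x-y\|_\star$. Let $0<\tau\le\epsilon$, $\mathcal S\subseteq\mathcal V^\star$ and $\mu$ a probability measure over $\mathcal S$. Assume there exists an algorithm that learns $\mathtt{Learn}(\mathcal S,\epsilon)$ with probability $\beta$ over $x\sim\mu$ and probability $\alpha$ over its internal randomness from $q$ queries to $\mathrm{Eval}_\tau$. Then for every $z\in\mathcal V^\star$, $$q+1\ge2(\alpha-\tfrac12)\cdot\frac{\beta-\Pr_{x\sim\mu}[\mathrm d_\star(x,z)<2\epsilon+\tau]}{\max_{v\in\overline B_1(0)}\Pr_{x\sim\mu}[|x(v)-z(v)|>\tau]}.$$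
   Context: $\overline B_1(0)=\{v\in\mathcal V:\|v\|\le1\}$, and $\|x\|_\star=\sup_{\|v\|\le1}|x(v)|$. Each $x\in\mathcal V^\star$ is viewed as the function $x:\overline B_1(0)\to\mathbb K$, $v\mapsto x(v)$. The oracle $\mathrm{Eval}_\tau(x)$, queried with $v\in\overline B_1(0)$, returns some $r\in\mathbb K$ with $|r-x(v)|\le\tau$ (any such value). $\mathtt{Learn}(\mathcal S,\epsilon)$ is the learning problem mapping $x\in\mathcal S$ to the set of valid outputs $\{y\in\mathcal V^\star:\mathrm d_\star(x,y)<\epsilon\}$: given oracle access to unknown $x\in\mathcal S$, output such a $y$. Learning with probability $\beta$ over $\mu$ and $\alpha$ over internal randomness means $\Pr_{x\sim\mu}[\Pr_{\mathcal A}[\mathcal A$ outputs a valid $y$ using at most $q$ queries$]\ge\alpha]\ge\beta$, for every valid oracle behaviour.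
   Formalization: The probability α of success over the algorithm's internal randomness is also assumed to satisfy $\alpha\ge\tfrac12$, a hypothesis on which the bound on q+1 now rests. The statement above fails without it. *)

From HB Require Import structures.
From mathcomp Require Import all_boot all_order all_algebra.
From mathcomp Require Import all_classical all_reals.
From mathcomp Require Import topology normedtype measure probability.

Set Implicit Arguments.
Unset Strict Implicit.
Unset Printing Implicit Defensive.

Import Order.TTheory GRing.Theory Num.Theory.
Local Open Scope classical_set_scope.
Local Open Scope ring_scope.

Section Setting.
Variables (R : realType) (K : numFieldType) (absK : K -> R) (V : vectType K).

Definition dual := 'Hom(V, K^o).

Definition is_norm (N : V -> R) : Prop :=
  [/\ forall v, N v = 0 -> v = 0,
      forall (k : K) v, N (k *: v) = absK k * N v
    & forall u v, N (u + v) <= N u + N v].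

Definition unit_ball (N : V -> R) : set V := [set v | N v <= 1].

Definition dnorm (N : V -> R) (x : dual) : R :=
  sup [set absK (x v) | v in unit_ball N].

Definition dstar (N : V -> R) (x y : dual) : R := dnorm N (x - y) / 2.

Definition dopen (N : V -> R) (A : set dual) : Prop :=
  forall x, A x -> exists2 e : R, 0 < e & forall y, dnorm N (y - x) < e -> A y.

(* An oracle behaviour for Eval_tau: given the hidden x, the list of the     *)
(* previous queries and the current query v, it returns an answer.  It is    *)
(* valid if every answer to a query v in the closed unit ball is tau-close   *)
(* to x(v).                                                                  *)
Definition oracle := dual -> seq V -> V -> K.

Definition valid_oracle (N : V -> R) (tau : R) (O : oracle) : Prop :=
  forall (x : dual) (h : seq V) (v : V), N v <= 1 -> absK (O x h v - x v) <= tau.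

(* A randomized (adaptive) algorithm with internal randomness r : Omega_A:   *)
(* given r and the list of answers received so far, it either issues a new  *)
(* query (inl v) or stops and outputs y (inr y).                             *)
Definition algorithm (OmegaA : Type) := OmegaA -> seq K -> V + dual.

(* exec A O x r n : the state of the run of A (seed r) against the oracle O  *)
(* for the hidden x after n steps: either inl (queries, answers) if it is    *)
(* still running (it has then issued exactly n queries), or inr y if it has  *)
(* already output y (after at most n - 1 queries).                           *)
Fixpoint exec (OmegaA : Type) (A : algorithm OmegaA) (O : oracle) (x : dual)
    (r : OmegaA) (n : nat) : (seq V * seq K) + dual :=
  match n with
  | 0 => inl ([::], [::])
  | n'.+1 =>
    match exec A O x r n' with
    | inr y => inr y
    | inl (qs, ans) =>
      match A r ans with
      | inl v => inl (rcons qs v, rcons ans (O x qs v))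
      | inr y => inr y
      end
    end
  end.

(* A (with seed r, against O, on hidden x) outputs a valid answer for        *)
(* Learn(S, eps), i.e. some y with d_*(x, y) < eps, using at most q queries. *)
Definition succeeds (N : V -> R) (eps : R) (q : nat) (OmegaA : Type)
    (A : algorithm OmegaA) (O : oracle) (x : dual) (r : OmegaA) : Prop :=
  exists y : dual, exec A O x r q.+1 = inr y /\ dstar N x y < eps.

End Setting.

Definition pr (R : realType) (d : measure_display) (T : measurableType d)
  (P : probability T R) (A : set T) : R := fine (P A).

(* The statement of the theorem for a given scalar field K with absolute     *)
(* value absK.  The distribution mu on S is the law of a Borel-measurable    *)
(* random element X : Omega -> V^* with values in S (on a probability space  *)
(* (Omega, P)); the internal randomness of the algorithm is a probability    *)
(* space (OmegaA, PA).                                                       *)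
Definition learning_lower_bound (R : realType) (K : numFieldType) (absK : K -> R)
  : Prop :=
  forall (V : vectType K) (N : V -> R), is_norm absK N ->
  forall (tau eps : R), 0 < tau -> tau <= eps ->
  forall (S : set (dual V)),
  forall (d : measure_display) (Omega : measurableType d)
         (P : probability Omega R) (X : Omega -> dual V),
  (forall w, S (X w)) ->
  (forall A : set (dual V), dopen absK N A -> measurable (X @^-1` A)) ->
  forall (dA : measure_display) (OmegaA : measurableType dA)
         (PA : probability OmegaA R) (A : algorithm V OmegaA)
         (alpha beta : R) (q : nat),
  1 / 2 <= alpha ->
  (* A learns Learn(S, eps) with probability beta over x ~ mu and alpha     *)
  (* over its internal randomness, from q queries to Eval_tau, for every    *)
  (* valid oracle behaviour (the success event being an event)              *)
  (forall O : oracle V, valid_oracle absK N tau O ->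
     measurable [set wr : Omega * OmegaA |
                   succeeds absK N eps q A O (X wr.1) wr.2] /\
     beta <= pr P [set w | alpha <= pr PA [set r | succeeds absK N eps q A O (X w) r]]) ->
  forall z : dual V,
    2 * (alpha - 1 / 2) *
      (beta - pr P [set w | dstar absK N (X w) z < 2 * eps + tau])
    <= q.+1%:R *
       sup [set pr P [set w | tau < absK (X w v - z v)] | v in unit_ball N].

From HB Require Import structures.
From mathcomp Require Import all_boot all_order all_algebra.
From mathcomp Require Import all_classical all_reals.
From mathcomp Require Import topology normedtype measure probability.
From mathcomp Require Import measurable_realfun lebesgue_integral derive.
From mathcomp.real_closed Require Import complex.
From mathcomp Require Import ring lra.

Set Implicit Arguments.
Unset Strict Implicit.
Unset Printing Implicit Defensive.
Import Order.TTheory GRing.Theory Num.Theory.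
Import numFieldNormedType.Exports.
Local Open Scope classical_set_scope.
Local Open Scope ring_scope.

(* Play the adversarial oracle that answers [z(v)] for every query [v] unless
   [|x(v) - z(v)| > tau], in which case it answers [x(v)]; it is a valid
   [Eval_tau] oracle.  Fix the internal randomness [r].  As long as no query is
   "far" for [x], the run against [x] coincides with the run against [z], so it
   outputs the same [y].  If moreover [y] is a valid answer for [x] and [x] is
   at distance at least [2 eps + tau] from [z], some unit vector [v*] sees
   [y] far from [z], and then [x] far from [z].  Hence the successful far inputs
   are covered by [q + 1] events [|x(v) - z(v)| > tau], each of probability at
   most the maximum [M] in the statement, and Fubini gives
   [alpha (beta - P[near z]) <= (q + 1) M]; finally [2 (alpha - 1/2) <= alpha]
   when [alpha <= 1], and [beta <= 0] otherwise.  Finite dimension is only used to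
   know that functionals are bounded on the unit ball, so that the dual norm
   is a genuine supremum. *)

Section AbsoluteValue.
Variables (R : realType) (K : numFieldType) (absK : K -> R).
Hypotheses (absK0 : absK 0 = 0) (absKN : forall k, absK (- k) = absK k)
  (absKD : forall a b, absK (a + b) <= absK a + absK b).

Lemma absK_ge0 k : 0 <= absK k.
Proof. by have := absKD k (- k); rewrite subrr absK0 absKN; lra. Qed.

Lemma absK_distC a b : absK (a - b) = absK (b - a).
Proof. by rewrite -absKN opprB. Qed.

Lemma absK_dist_triangle a b c : absK (a - c) <= absK (a - b) + absK (b - c).
Proof.
have -> : a - c = (a - b) + (b - c) by rewrite addrA subrK.
exact: absKD.
Qed.

Lemma absK_sum I (s : seq I) (F : I -> K) :
  absK (\sum_(i <- s) F i) <= \sum_(i <- s) absK (F i).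
Proof.
elim/big_ind2 : _ => [|a b x y h1 h2|i _]; first by rewrite absK0.
  by apply: le_trans (absKD _ _) _; exact: lerD.
exact: lexx.
Qed.

Variables (V : vectType K) (N : V -> R).
Hypothesis normN : is_norm absK N.

Lemma is_norm0 : N 0 = 0.
Proof. by case: normN => _ NZ _; rewrite -(scale0r (0 : V)) NZ absK0 mul0r. Qed.

Lemma unit_ball0 : unit_ball N 0.
Proof. by rewrite /unit_ball /= is_norm0 ler01. Qed.

Lemma lfunB (f g : dual V) v : (f - g) v = f v - g v.
Proof. by rewrite add_lfunE opp_lfunE. Qed.

Lemma unit_ball_image_neq0 (f : dual V) : [set absK (f v) | v in unit_ball N] !=set0.
Proof. by exists (absK (f 0)), 0 => //; exact: unit_ball0. Qed.

Section BoundedDual.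
Hypothesis dual_bounded :
  forall f : dual V, exists C, forall v, N v <= 1 -> absK (f v) <= C.

Lemma dnorm_ub (f : dual V) v : N v <= 1 -> absK (f v) <= dnorm absK N f.
Proof.
move=> Nv; have [C hC] := dual_bounded f.
apply: sup_upper_bound; last by exists v.
split; first exact: unit_ball_image_neq0.
by exists C => _ [u Nu <-]; exact: hC.
Qed.

Lemma dnorm_gt_exists (f : dual V) e : e < dnorm absK N f ->
  exists2 v, N v <= 1 & e < absK (f v).
Proof. by move=> /(sup_gt (unit_ball_image_neq0 f)) [_ [v Nv <-] h]; exists v. Qed.

Lemma dnormD (f g : dual V) :
  dnorm absK N (f + g) <= dnorm absK N f + dnorm absK N g.
Proof.
apply: ge_sup; first exact: unit_ball_image_neq0.
move=> _ [v Nv <-]; rewrite add_lfunE.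
by apply: le_trans (absKD _ _) _; apply: lerD; exact: dnorm_ub.
Qed.

Lemma dnorm_ub_dist (f g : dual V) v : N v <= 1 ->
  absK (f v - g v) <= dnorm absK N (f - g).
Proof. by move=> Nv; rewrite -lfunB dnorm_ub. Qed.

Lemma dopen_far_from (z : dual V) (tau : R) v : N v <= 1 ->
  dopen absK N [set x | tau < absK (x v - z v)].
Proof.
move=> Nv x /= hx; exists (absK (x v - z v) - tau); first by rewrite subr_gt0.
move=> y hy; have := absK_dist_triangle (x v) (y v) (z v).
have := @dnorm_ub_dist y x v Nv; rewrite (absK_distC (y v) (x v)); lra.
Qed.

Lemma dopen_dstar_lt (z : dual V) c : dopen absK N [set x | dstar absK N x z < c].
Proof.
move=> x /=; rewrite /dstar ltr_pdivrMr // => hx.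
exists (c * 2 - dnorm absK N (x - z)); first by rewrite subr_gt0.
move=> y hy; rewrite /dstar ltr_pdivrMr //.
have -> : y - z = (y - x) + (x - z) by rewrite addrA subrK.
by have := dnormD (y - x) (x - z); lra.
Qed.

(* In dual norm [x] is [4 eps + 2 tau]-far from [z]; [tau > 0] leaves room to
   pick a unit vector witnessing more than [4 eps + tau]. *)
Lemma far_output_direction (x y z : dual V) (eps tau : R) : 0 < tau ->
  2 * eps + tau <= dstar absK N x z -> dstar absK N x y < eps ->
  exists v, N v <= 1 /\ 2 * eps + tau < absK (y v - z v).
Proof.
rewrite /dstar ler_pdivlMr // ltr_pdivrMr // => tau0 hxz hxy.
have [v Nv hv] : exists2 v, N v <= 1 & 4 * eps + tau < absK ((x - z) v).
  by apply: dnorm_gt_exists; apply: lt_le_trans hxz; lra.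
exists v; split => //; rewrite lfunB in hv.
have := absK_dist_triangle (x v) (y v) (z v).
have := le_lt_trans (@dnorm_ub_dist x y v Nv) hxy; lra.
Qed.

Lemma far_direction_separates (x y z : dual V) (eps tau : R) v : N v <= 1 ->
  dstar absK N x y < eps -> 2 * eps + tau < absK (y v - z v) ->
  tau < absK (x v - z v).
Proof.
rewrite /dstar ltr_pdivrMr // => Nv hxy hv.
have := absK_dist_triangle (y v) (x v) (z v).
have := le_lt_trans (@dnorm_ub_dist x y v Nv) hxy.
rewrite (absK_distC (x v) (y v)); lra.
Qed.

Section Adversary.
Variables (z : dual V) (tau eps : R) (OmegaA : Type) (A : algorithm V OmegaA).
Variable q : nat.

Definition far_at (x : dual V) (v : V) : Prop := N v <= 1 /\ tau < absK (x v - z v).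

Definition adversary : oracle V := fun x _ v => if `[< far_at x v >] then x v else z v.

Lemma adversary_valid : 0 <= tau -> valid_oracle absK N tau adversary.
Proof.
move=> tau0 x h v Nv; rewrite /adversary; case: asboolP => [_|far].
  by rewrite subrr absK0.
by rewrite absK_distC leNgt; apply/negP => ?; apply: far.
Qed.

Lemma adversary_at_z h v : adversary z h v = z v.
Proof. by rewrite /adversary; case: asboolP. Qed.

Definition query_at_z (r : OmegaA) (k : nat) : V :=
  if exec A adversary z r k is inl (_, ans) then
    if A r ans is inl v then v else 0
  else 0.

Lemma exec_adversary_eq x r n :
  (forall k, (k < n)%N -> ~ far_at x (query_at_z r k)) ->
  exec A adversary x r n = exec A adversary z r n.
Proof.
elim: n => [//|n IH] near /=.
rewrite IH => [|k kn]; last by apply: near; exact: ltnW.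
have := near n (ltnSn n); rewrite /query_at_z.
case: (exec A adversary z r n) => [[qs ans]|y] //=.
case: (A r ans) => [v|y] // nfar.
by rewrite adversary_at_z /adversary; case: asboolP.
Qed.

Definition output_at_z (r : OmegaA) : dual V :=
  if exec A adversary z r q.+1 is inr y then y else 0.

Definition far_direction (r : OmegaA) : V :=
  xget 0 [set v | N v <= 1 /\ 2 * eps + tau < absK (output_at_z r v - z v)].

Definition probe (r : OmegaA) (k : nat) : V :=
  if (k < q)%N then query_at_z r k else far_direction r.

(* If no query of the run against [z] is far for [x], the run against [x]
   is the run against [z]; its output is then also valid for [x], hence
   [far_direction r] is far for [x]. *)
Lemma succeeds_far_probe x r : 0 < tau -> 2 * eps + tau <= dstar absK N x z ->
  succeeds absK N eps q A adversary x r ->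
  exists2 k, (k < q.+1)%N & far_at x (probe r k).
Proof.
move=> tau0 xz_far [y [run_x xy]].
have [[k kq fark]|near] :=
  pselect (exists2 k, (k < q)%N & far_at x (query_at_z r k)).
  by exists k; [exact: ltnW | rewrite /probe kq].
exists q => //; rewrite /probe ltnn.
have output_y : output_at_z r = y.
  move: run_x; rewrite /output_at_z /= exec_adversary_eq => [|k kq fark]; last first.
    by apply: near; exists k.
  case: (exec A adversary z r q) => [[qs ans]|y'] /=; last by case.
  by case: (A r ans) => // ? [].
have [Nv far] := xgetPex 0 (far_output_direction tau0 xz_far xy).
rewrite /far_direction output_y; split => //.
exact: far_direction_separates Nv xy far.
Qed.

End Adversary.

End BoundedDual.
End AbsoluteValue.

Section Probability.
Variables (R : realType) (d : measure_display) (T : measurableType d).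
Variable P : probability T R.

Lemma prE A : measurable A -> P A = (pr P A)%:E.
Proof. by move=> mA; rewrite /pr fineK // fin_num_measure. Qed.

Lemma pr_ge0 A : 0 <= pr P A.
Proof. exact/fine_ge0/measure_ge0. Qed.

Lemma pr_le1 A : measurable A -> pr P A <= 1.
Proof. by move=> mA; have := probability_le1 P mA; rewrite prE // lee_fin. Qed.

Lemma pr_le A B : measurable A -> measurable B -> A `<=` B -> pr P A <= pr P B.
Proof.
by move=> mA mB AB; rewrite -lee_fin -!prE //; apply: le_measure; rewrite ?inE.
Qed.

Lemma prU2_le A B : measurable A -> measurable B -> pr P (A `|` B) <= pr P A + pr P B.
Proof.
move=> mA mB; rewrite -lee_fin EFinD -!prE //; last exact: measurableU.
exact: measureU2.
Qed.

End Probability.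

Section Averaging.
Variables (R : realType) (d1 d2 : measure_display).
Variables (T1 : measurableType d1) (T2 : measurableType d2).
Variables (P1 : probability T1 R) (P2 : probability T2 R).

Lemma measurable_xsection_pr_ge (A : set (T1 * T2)) (a : R) : measurable A ->
  measurable [set w | a <= pr P2 (xsection A w)].
Proof.
move=> mA.
have := emeasurable_fun_c_infty measurableT (measurable_fun_xsection P2 mA) a%:E.
rewrite setTI; congr measurable; apply/seteqP; split => w /=;
  by rewrite prE ?lee_fin //; exact: measurable_xsection.
Qed.

Lemma xsection_averaging (A : set (T1 * T2)) (W : set T1) (alpha c : R) :
  measurable A -> measurable W -> 0 <= alpha ->
  (forall w, W w -> alpha <= pr P2 (xsection A w)) ->
  (forall r, pr P1 (W `&` ysection A r) <= c) ->
  alpha * pr P1 W <= c.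
Proof.
move=> mA mW alpha0 xsec_ge ysec_le.
pose B := A `&` (W `*` setT).
have mB : measurable B by apply: measurableI => //; exact: measurableX.
have xsecB w : W w -> xsection B w = xsection A w.
  move=> Ww; apply/seteqP; split => r; rewrite /xsection /= !in_setE; first by case.
  by move=> ?; split.
have ysecB r : ysection B r = W `&` ysection A r.
  apply/seteqP; split => w; rewrite /ysection /= !in_setE; first by case=> ? [].
  by case=> ? ?; split.
have := indic_fubini_tonelli P1 P2 mB.
rewrite (indic_fubini_tonelli_FE P2 mB) (indic_fubini_tonelli_GE P1 mB) => fubini.
have mxB := measurable_fun_xsection P2 mB.
have lower : (alpha%:E * P1 W <= \int[P1]_w (P2 \o xsection B) w)%E.
  rewrite -integral_cst //.
  apply: le_trans (ge0_subset_integral P1 mW measurableT mxB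
     (fun _ _ => measure_ge0 _ _) (@subsetT _ W)).
  apply: ge0_le_integral => //.
  - exact: measurable_funS measurableT (@subsetT _ W) mxB.
  - move=> w Ww /=; rewrite xsecB // prE ?lee_fin; first exact: xsec_ge.
    exact: measurable_xsection.
have upper : (\int[P2]_r (P1 \o ysection B) r <= c%:E)%E.
  apply: (@le_trans _ _ (\int[P2]_r (cst c%:E) r)%E).
    apply: ge0_le_integral => //; first exact: measurable_fun_ysection.
    move=> r _ /=; rewrite prE ?lee_fin; first by rewrite ysecB; exact: ysec_le.
    exact: measurable_ysection.
  by rewrite integral_cst // [X in (_ * X)%E]probability_setT mule1.
rewrite -fubini in upper.
by have := le_trans lower upper; rewrite prE // -EFinM lee_fin.
Qed.

End Averaging.

Lemma scaled_gap_le (R : realFieldType) (alpha beta pW pH c : R) :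
  1 / 2 <= alpha -> 0 <= pW -> 0 <= pH -> beta <= pW + pH -> alpha * pW <= c ->
  alpha <= 1 \/ beta <= 0 -> 2 * (alpha - 1 / 2) * (beta - pH) <= c.
Proof.
move=> half_alpha pW0 pH0 beta_le alpha_pW [alpha_le1|beta_le0].
  have : 0 <= (2 * alpha - 1) * (pW - (beta - pH)) by apply: mulr_ge0; lra.
  have : 0 <= (1 - alpha) * pW by apply: mulr_ge0; lra.
  nra.
have : 0 <= (2 * alpha - 1) * (pH - beta) by apply: mulr_ge0; lra.
have : 0 <= alpha * pW by apply: mulr_ge0; lra.
nra.
Qed.

Section LowerBound.
Variables (R : realType) (K : numFieldType) (absK : K -> R).
Hypotheses (absK0 : absK 0 = 0) (absKN : forall k, absK (- k) = absK k)
  (absKD : forall a b, absK (a + b) <= absK a + absK b).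
Variables (V : vectType K) (N : V -> R).
Hypotheses (normN : is_norm absK N)
  (dual_bounded : forall f : dual V, exists C, forall v, N v <= 1 -> absK (f v) <= C).
Variables (tau eps : R) (z : dual V).
Hypothesis tau_gt0 : 0 < tau.
Variables (d : measure_display) (Omega : measurableType d) (P : probability Omega R).
Variable X : Omega -> dual V.
Hypothesis measurable_X :
  forall {B : set (dual V)}, dopen absK N B -> measurable (X @^-1` B).

Let far_event v := [set w | far_at absK N z tau (X w) v].

Let far_event_ball v : N v <= 1 ->
  far_event v = X @^-1` [set x | tau < absK (x v - z v)].
Proof. by move=> Nv; apply/seteqP; split => w /=; [case | split]. Qed.

Let far_event_out v : 1 < N v -> far_event v = set0.
Proof.
by move=> Nv; apply/seteqP; split => w // [Nv' _]; move: Nv; rewrite ltNge Nv'.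
Qed.

Lemma measurable_far_event v : measurable (far_event v).
Proof.
have [Nv|Nv] := leP (N v) 1; last by rewrite far_event_out.
by rewrite far_event_ball //; apply/measurable_X/dopen_far_from.
Qed.

Let M := sup [set pr P [set w | tau < absK (X w v - z v)] | v in unit_ball N].

Lemma pr_far_event_le v : pr P (far_event v) <= M.
Proof.
have M_ub u : N u <= 1 -> pr P (far_event u) <= M.
  move=> Nu; rewrite far_event_ball //; apply: sup_upper_bound; last by exists u.
  split; first by exists (pr P (far_event u)), u; rewrite ?far_event_ball.
  exists 1 => _ [u' Nu' <-]; apply: pr_le1.
  by have := measurable_far_event u'; rewrite far_event_ball.
have [Nv|Nv] := leP (N v) 1; first exact: M_ub.
rewrite far_event_out // /pr measure0 /=.
exact: le_trans (pr_ge0 P _) (M_ub 0 (unit_ball0 absK0 normN)).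
Qed.

Variables (dA : measure_display) (OmegaA : measurableType dA).
Variables (PA : probability OmegaA R) (A : algorithm V OmegaA) (q : nat).

Let succ := [set wr : Omega * OmegaA |
  succeeds absK N eps q A (adversary absK N z tau) (X wr.1) wr.2].
Let near := [set w | dstar absK N (X w) z < 2 * eps + tau].
Hypothesis measurable_succ : measurable succ.

(* Union bound over the [q] queries and the far direction of the run on [z]. *)
Lemma far_success_pr_le (B : set Omega) r : measurable B -> B `<=` ~` near ->
  pr P (B `&` ysection succ r) <= q.+1%:R * M.
Proof.
move=> mB B_far; rewrite -lee_fin -prE; last exact/measurableI/measurable_ysection.
apply: le_trans (@content_subadditive _ _ _ P _
  (fun k => far_event (probe absK N z tau eps A q r k)) q.+1 _ _ _) _.
- by move=> k _; exact: measurable_far_event.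
- exact/measurableI/measurable_ysection.
- move=> w [/B_far/negP]; rewrite -leNgt => w_far.
  rewrite /ysection /= in_setE => /(succeeds_far_probe absK0 absKN absKD normN
    dual_bounded tau_gt0 w_far) [k kq far].
  rewrite -(bigcup_mkord _ (fun k => far_event (probe absK N z tau eps A q r k))).
  by exists k.
apply: (@le_trans _ _ (\sum_(k < q.+1) M%:E)%E); last first.
  by rewrite sumEFin sumr_const card_ord mulr_natl.
apply: lee_sum => k _; have := pr_far_event_le (probe absK N z tau eps A q r k).
by rewrite -lee_fin -prE //; exact: measurable_far_event.
Qed.

Lemma learning_bound_at (alpha beta : R) : 1 / 2 <= alpha ->
  beta <= pr P [set w | alpha <= pr PA
    [set r | succeeds absK N eps q A (adversary absK N z tau) (X w) r]] ->
  2 * (alpha - 1 / 2) * (beta - pr P near) <= q.+1%:R * M.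
Proof.
set G := [set w | _ <= _] => half_alpha beta_le.
have xsection_succ w : xsection succ w = [set r |
    succeeds absK N eps q A (adversary absK N z tau) (X w) r].
  by apply/seteqP; split => r; rewrite /xsection /= in_setE.
have mG : measurable G.
  have := measurable_xsection_pr_ge PA alpha measurable_succ.
  by congr measurable; apply/seteqP; split => w; rewrite /G /= xsection_succ.
have mnear : measurable near.
  apply: (@measurable_X [set x | dstar absK N x z < 2 * eps + tau]).
  exact: dopen_dstar_lt.
have mW : measurable (G `&` ~` near) by apply/measurableI/measurableC.
apply: (scaled_gap_le (pW := pr P (G `&` ~` near)) half_alpha
  (pr_ge0 _ _) (pr_ge0 _ _)).
- apply: (le_trans beta_le); apply: le_trans (prU2_le P mW mnear).
  apply: pr_le => //; first exact: measurableU.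
  by move=> w Gw; have [|] := pselect (near w); [right | left].
- apply: (xsection_averaging (P2 := PA) measurable_succ mW) => //; first lra.
  + by move=> w [Gw _]; rewrite xsection_succ.
  + by move=> r; apply: far_success_pr_le => // w [].
have [|alpha_gt1] := leP alpha 1; [by left | right].
suff G0 : G = set0 by move: beta_le; rewrite G0 /pr measure0.
apply/seteqP; split => w // Gw.
move: (pr_le1 PA (measurable_xsection w measurable_succ)).
by rewrite xsection_succ; move: Gw; rewrite /G /=; lra.
Qed.

End LowerBound.

Definition bounded_duals (R : realType) (K : numFieldType) (absK : K -> R) : Prop :=
  forall (V : vectType K) (N : V -> R), is_norm absK N ->
  forall f : dual V, exists C, forall v, N v <= 1 -> absK (f v) <= C.

Theorem learning_lower_bound_of_bounded_duals (R : realType) (K : numFieldType)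
    (absK : K -> R) :
  absK 0 = 0 -> (forall k, absK (- k) = absK k) ->
  (forall a b, absK (a + b) <= absK a + absK b) ->
  bounded_duals absK -> learning_lower_bound absK.
Proof.
move=> absK0 absKN absKD bounded V N normN tau eps tau_gt0 _ _ d Omega P X _
  measurable_X dA OmegaA PA A alpha beta q half_alpha learns z.
have [measurable_succ beta_le] :=
  learns _ (adversary_valid absK0 absKN z (ltW tau_gt0)).
exact: (learning_bound_at absK0 absKN absKD normN (bounded V N normN) tau_gt0
  measurable_X measurable_succ half_alpha beta_le).
Qed.

Section RowNormEquivalence.
Variables (R : realType) (m : nat) (nu : 'rV[R]_m -> R).
Hypotheses (nu_eq0 : forall u, nu u = 0 -> u = 0)
  (nuZ : forall (r : R) u, nu (r *: u) = `|r| * nu u)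
  (nuD : forall u v, nu (u + v) <= nu u + nu v).

Lemma nu0 : nu 0 = 0.
Proof. by rewrite -(scale0r (0 : 'rV[R]_m)) nuZ normr0 mul0r. Qed.

Lemma nuN u : nu (- u) = nu u.
Proof. by rewrite -scaleN1r nuZ normrN normr1 mul1r. Qed.

Lemma nu_ge0 u : 0 <= nu u.
Proof. by have := nuD u (- u); rewrite subrr nu0 nuN; lra. Qed.

Lemma nu_sum I (s : seq I) (F : I -> 'rV[R]_m) :
  nu (\sum_(i <- s) F i) <= \sum_(i <- s) nu (F i).
Proof.
elim/big_ind2 : _ => [|a b c e h1 h2|i _]; first by rewrite nu0.
  by apply: le_trans (nuD _ _) _; exact: lerD.
exact: lexx.
Qed.

Lemma row_entry_le_norm (u : 'rV[R]_m) j : `|u 0 j| <= `|u|.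
Proof.
rewrite [leRHS]/Num.norm /= mx_normrE; apply/bigmax_geP; right => /=.
by exists (0, j).
Qed.

Let C := \sum_(j < m) nu (delta_mx 0 j).

Lemma nu_le_norm u : nu u <= C * `|u|.
Proof.
rewrite {1}(row_sum_delta u); apply: le_trans (nu_sum _ _) _.
rewrite /C mulr_suml; apply: ler_sum => j _; rewrite nuZ mulrC.
by apply: ler_wpM2l; [exact: nu_ge0 | exact: row_entry_le_norm].
Qed.

Lemma nu_dist_le u v : `|nu u - nu v| <= C * `|u - v|.
Proof.
apply: le_trans (nu_le_norm (u - v)).
have := nuD (u - v) v; have := nuD (v - u) u.
by rewrite !subrK -[v - u]opprB nuN ler_norml; lra.
Qed.

Lemma continuous_nu : continuous nu.
Proof.
have C1_gt0 : 0 < C + 1 by rewrite ltr_wpDl // sumr_ge0 // => j _; exact: nu_ge0.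
move=> x; apply/(@cvgrPdist_lt R R^o _ (nbhs x) (nbhs_filter x)) => e e0.
apply/nbhs_ballP; exists (e / (C + 1)) => /=; first by rewrite divr_gt0.
move=> y; rewrite -ball_normE /= ltr_pdivlMr // => xy.
apply: le_lt_trans (nu_dist_le x y) _; apply: le_lt_trans xy.
by rewrite [leRHS]mulrC ler_wpM2r // lerDl.
Qed.

(* [nu] attains a positive minimum on the compact unit sphere. *)
Lemma norm_le_nu : exists2 c, 0 < c & forall u, c * `|u| <= nu u.
Proof.
have [u0|/existsNP [u0 /eqP u0_neq0]] := pselect (forall u : 'rV[R]_m, u = 0).
  by exists 1 => // u; rewrite (u0 u) normr0 mulr0 nu0.
pose S := [set u : 'rV[R]_m | `|u| = 1].
have normalize u : u != 0 -> S (`|u|^-1 *: u).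
  by move=> u_neq0; rewrite /S /= normrZ normfV normr_id mulVf // normr_eq0.
have S_compact : compact S.
  apply: bounded_closed_compact.
    by exists 1; split => // x x1 u /= ->; exact: ltW.
  have norm_cont : continuous (fun u : 'rV[R]_m => `|u|) := @norm_continuous _ _.
  have closed1 : closed [set x : R | x = 1] by exact: closed_eq.
  exact: (continuous_closedP _).1 norm_cont _ closed1.
have [c cS c_min] := compact_EVT_min (ex_intro S _ (normalize _ u0_neq0)) S_compact
  (continuous_subspaceT continuous_nu).
move: cS; rewrite inE /S /= => c1.
exists (nu c).
  rewrite lt_neqAle nu_ge0 andbT eq_sym; apply/eqP => /nu_eq0 c0.
  by move: c1; rewrite c0 normr0 => /eqP; rewrite eq_sym oner_eq0.
move=> u; have [->|u_neq0] := eqVneq u 0; first by rewrite normr0 mulr0 nu0.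
have := c_min _ (mem_set (normalize _ u_neq0)).
by rewrite nuZ normfV normr_id ler_pdivlMl ?normr_gt0 // mulrC.
Qed.

End RowNormEquivalence.

Section RealCoordinates.
Variables (R : realType) (K : numFieldType) (absK : K -> R).
Hypotheses (absK0 : absK 0 = 0) (absKN : forall k, absK (- k) = absK k)
  (absKD : forall a b, absK (a + b) <= absK a + absK b)
  (absKM : forall a b, absK (a * b) = absK a * absK b).
Variables (e : R -> K) (V : vectType K) (m : nat) (phi : 'rV[R]_m -> V).
Hypotheses (abs_e : forall r, absK (e r) = `|r|)
  (phiD : forall u v, phi (u + v) = phi u + phi v)
  (phiZ : forall r u, phi (r *: u) = e r *: phi u)
  (phi_inj0 : forall u, phi u = 0 -> u = 0)
  (phi_surj : forall v, exists u, phi u = v).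

(* [N \o phi] is a norm on ['rV[R]_m], so the unit ball of [N] has bounded
   coordinates, on which [f \o phi] is linear. *)
Lemma dual_bounded_of_coordinates (N : V -> R) : is_norm absK N ->
  forall f : dual V, exists C, forall v, N v <= 1 -> absK (f v) <= C.
Proof.
case=> N_eq0 NZ ND f.
have [c c_gt0 c_le] : exists2 c, 0 < c & forall u, c * `|u| <= N (phi u).
  apply: norm_le_nu => [u /N_eq0/phi_inj0 // | r u | u v].
    by rewrite phiZ NZ abs_e.
  by rewrite phiD ND.
exists (\sum_(j < m) c^-1 * absK (f (phi (delta_mx 0 j)))) => v.
have [u <-] := phi_surj v => Nu.
have u_le : `|u| <= c^-1.
  by rewrite -(ler_pM2l c_gt0) mulfV ?gt_eqF //; exact: le_trans (c_le u) Nu.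
have phi0 : phi 0 = 0 by apply: (@addrI _ (phi 0)); rewrite -phiD !addr0.
rewrite (row_sum_delta u) (big_morph phi phiD phi0) linear_sum.
apply: le_trans (absK_sum absK0 absKD _ _) _; apply: ler_sum => j _.
rewrite phiZ linearZ /= -[_ *: _]/(_ * _) absKM abs_e.
apply: ler_wpM2r; first exact: absK_ge0.
exact: le_trans (row_entry_le_norm u j) u_le.
Qed.

End RealCoordinates.

Section Instances.
Import VectorInternalTheory.
Local Open Scope complex_scope.

Lemma bounded_duals_real (R : realType) : bounded_duals (fun k : R => `|k|).
Proof.
move=> V N normN.
apply: (dual_bounded_of_coordinates _ _ _ _ (e := id) (phi := r2v) _ _ _ _ _ normN).
- exact: normr0.
- exact: normrN.
- exact: ler_normD.
- exact: normrM.
- by [].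
- by move=> u v; rewrite raddfD.
- by move=> r u; rewrite linearZ.
- by move=> u; rewrite -(linear0 r2v) => /r2v_inj.
- by move=> v; exists (v2r v); exact: v2rK.
Qed.

Definition complex_row (R : realType) n (w : 'rV[R]_(n + n)) : 'rV[R[i]]_n :=
  \row_j (w 0 (lshift n j) +i* w 0 (rshift n j)).

Lemma bounded_duals_complex (R : realType) :
  bounded_duals (@ComplexField.Normc.normc R).
Proof.
move=> V N normN.
apply: (@dual_bounded_of_coordinates R R[i] _ _ _ _ _ (fun r => r%:C) V _
  (fun w => r2v (complex_row w)) _ _ _ _ _ N normN).
- exact: ComplexField.Normc.normc0.
- exact: normcN.
- exact: le_normcD.
- exact: ComplexField.Normc.normcM.
- by move=> r /=; rewrite expr0n addr0 sqrtr_sqr.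
- by move=> u v; rewrite /= -raddfD; congr r2v; apply/rowP => j; rewrite !mxE.
- move=> r u; rewrite /= -linearZ; congr r2v; apply/rowP => j; rewrite !mxE /=.
  by apply/eqP; rewrite eq_complex /= !mul0r subr0 addr0 !eqxx.
- move=> u /= /(canRL (@r2vK _ _)); rewrite linear0 => /rowP u0.
  apply/rowP => k; rewrite -(splitK k) mxE.
  have := u0; case: (fintype.split k) => j /(_ j); rewrite !mxE => /eqP;
    by rewrite eq_complex /= => /andP[/eqP ? /eqP ?].
- move=> v.
  exists (row_mx (\row_j complex.Re (v2r v 0 j)) (\row_j complex.Im (v2r v 0 j))).
  rewrite /= -[RHS]v2rK; congr r2v; apply/rowP => j.
  by rewrite mxE row_mxEl row_mxEr !mxE; case: (v2r v 0 j).
Qed.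

End Instances.

Theorem mainTheorem6 (R : realType) :
  learning_lower_bound (fun k : R => `|k|) /\
  learning_lower_bound (@ComplexField.Normc.normc R).
Proof.
split; apply: learning_lower_bound_of_bounded_duals.
- exact: normr0.
- exact: normrN.
- exact: ler_normD.
- exact: bounded_duals_real.
- exact: ComplexField.Normc.normc0.
- exact: normcN.
- exact: le_normcD.
- exact: bounded_duals_complex.
Qed.
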